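(* Let $\alpha>0$, $\sigma_A^2\ge0$, $\eta>0$, $q>0$, let $K^*(x)=\alpha x+\tfrac13[(2x+\alpha^2)^{3/2}-\alpha^3]$ and define \[ h(x)=K^*(x)-\eta\sqrt{2x+q^2}+\eta q,\qquad x\ge0. \] Assume $\nabla h(0)\ge0$. Then $h$ is convex and increasing on $\mathbb{R}_+$. Moreover, the diffusion Bellman error \[ \mathcal{E}^D_B(x)=\min_{u\ge0}\Bigl(x+\tfrac12u^2+(-u+\alpha)\nabla h(x)+\tfrac12\sigma_A^2\nabla^2h(x)\Bigr) \] is bounded over $x\in\mathbb{R}_+$, and $|\mathcal{E}^D_B(x)-\eta|=O\bigl((1+x)^{-1/2}\bigr)$ as $x\to\infty$.
   Context: This is the diffusion approximation of the speed scaling queue $X(t+1)=X(t)-U(t)+A(t+1)$ with cost $c(x,u)=x+\tfrac12u^2$, whose i.i.d. arrivals have mean $\alpha$ and variance $\sigma_A^2$; the diffusion generator is $\mathcal{D}^D_uh(x)=(-u+\alpha)\nabla h(x)+\tfrac12\sigma_A^2\nabla^2h(x)$. *)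

From Stdlib Require Import Reals.
From Coquelicot Require Import Coquelicot.
Open Scope R_scope.

Definition Kstar (alpha x : R) : R :=
  alpha * x + / 3 * (Rpower (2 * x + alpha ^ 2) (3 / 2) - alpha ^ 3).

Definition hfun (alpha eta q : R) (x : R) : R :=
  Kstar alpha x - eta * sqrt (2 * x + q ^ 2) + eta * q.

Definition bellman_objective (alpha sigma2 : R) (h : R -> R) (x u : R) : R :=
  x + / 2 * u ^ 2 + (- u + alpha) * Derive h x
    + / 2 * sigma2 * Derive_n h 2 x.

Definition bellman_error (alpha sigma2 : R) (h : R -> R) (x : R) : R :=
  real (Glb_Rbar (fun y => exists u, 0 <= u /\ y = bellman_objective alpha sigma2 h x u)).

(* The derivative [h' x = alpha + sqrt (2x + alpha^2) - eta / sqrt (2x + q^2)] is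
   increasing on [R_+], so [h' 0 >= 0] makes [h] convex and increasing. Since [h' >= 0],
   the minimum over [u >= 0] is attained at [u = h' x], where the objective is
   [x - h'^2/2 + alpha h' + sigma2/2 h'']. With [s = sqrt (2x + alpha^2)],
   [r = sqrt (2x + q^2)] and [x = (s^2 - alpha^2)/2] this equals
   [eta + eta (s - r)/r - eta^2/(2r^2) + sigma2/2 (1/s + eta/r^3)], and as
   [|s - r| <= alpha + q] the correction is [O(1/r + 1/s) = O((1+x)^(-1/2))]. *)
From Stdlib Require Import Reals Lra.
From Coquelicot Require Import Coquelicot.
Open Scope R_scope.

Lemma MVT_halfline (f f' : R -> R) (l u v : R) :
  (forall x, l <= x -> is_derive f x (f' x)) -> l <= u -> u < v ->
  exists c, u < c < v /\ f v - f u = f' c * (v - u).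
Proof.
  intros Hf Hu Huv.
  destruct (MVT_cor2 f f' u v Huv) as [c [Heq Hc]].
  - intros c Hc. apply is_derive_Reals, Hf. lra.
  - exists c. split; assumption.
Qed.

Lemma MVT_halfline_le (f f' : R -> R) (l u v : R) :
  (forall x, l <= x -> is_derive f x (f' x)) -> l <= u -> u <= v ->
  exists c, u <= c <= v /\ f v - f u = f' c * (v - u).
Proof.
  intros Hf Hu Huv. destruct (Rle_lt_or_eq_dec u v Huv) as [Hlt | <-].
  - destruct (MVT_halfline f f' l u v Hf Hu Hlt) as [c [Hc Heq]].
    exists c. split; [lra | assumption].
  - exists u. split; [lra | ring].
Qed.

Lemma convex_of_derive_nondecreasing (f f' : R -> R) (l : R) :
  (forall x, l <= x -> is_derive f x (f' x)) ->
  (forall x y, l <= x -> x <= y -> f' x <= f' y) ->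
  forall x y t, l <= x -> l <= y -> 0 <= t <= 1 ->
  f (t * x + (1 - t) * y) <= t * f x + (1 - t) * f y.
Proof.
  intros Hf Hmono.
  assert (Hwlog : forall x y t, l <= x -> x <= y -> 0 <= t <= 1 ->
            f (t * x + (1 - t) * y) <= t * f x + (1 - t) * f y).
  { intros x y t Hx Hxy Ht.
    set (z := t * x + (1 - t) * y).
    destruct (MVT_halfline_le f f' l x z Hf Hx) as [c1 [Hc1 E1]]; [unfold z; nra |].
    destruct (MVT_halfline_le f f' l z y Hf) as [c2 [Hc2 E2]]; [unfold z; nra .. |].
    assert (Hc12 : f' c1 <= f' c2) by (apply Hmono; lra).
    replace (z - x) with ((1 - t) * (y - x)) in E1 by (unfold z; ring).
    replace (y - z) with (t * (y - x)) in E2 by (unfold z; ring).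
    assert (0 <= t * (1 - t) * (y - x) * (f' c2 - f' c1)).
    { repeat apply Rmult_le_pos; lra. }
    nra. }
  intros x y t Hx Hy Ht. destruct (Rle_dec x y) as [Hxy | Hyx].
  - apply Hwlog; assumption.
  - replace (t * x + (1 - t) * y) with ((1 - t) * y + (1 - (1 - t)) * x) by ring.
    replace (t * f x + (1 - t) * f y) with ((1 - t) * f y + (1 - (1 - t)) * f x) by ring.
    apply Hwlog; lra.
Qed.

Lemma increasing_of_derive_pos (f f' : R -> R) (l : R) :
  (forall x, l <= x -> is_derive f x (f' x)) ->
  (forall x, l < x -> 0 < f' x) ->
  forall x y, l <= x -> x < y -> f x < f y.
Proof.
  intros Hf Hpos x y Hx Hxy.
  destruct (MVT_halfline f f' l x y Hf Hx Hxy) as [c [Hc Heq]].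
  assert (0 < f' c * (y - x)) by (apply Rmult_lt_0_compat; [apply Hpos | ]; lra).
  lra.
Qed.

Lemma Glb_Rbar_attained (f : R -> R) (u0 : R) :
  0 <= u0 -> (forall u, 0 <= u -> f u0 <= f u) ->
  Glb_Rbar (fun y => exists u, 0 <= u /\ y = f u) = Finite (f u0).
Proof.
  intros Hu0 Hmin. apply is_glb_Rbar_unique. split.
  - intros y [u [Hu ->]]. apply Hmin, Hu.
  - intros b Hb. apply Hb. exists u0. split; [exact Hu0 | reflexivity].
Qed.

Lemma bellman_error_nonneg_slope (alpha sigma2 : R) (h : R -> R) (x : R) :
  0 <= Derive h x ->
  bellman_error alpha sigma2 h x =
  x - / 2 * Derive h x ^ 2 + alpha * Derive h x + / 2 * sigma2 * Derive_n h 2 x.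
Proof.
  intros Hd. unfold bellman_error.
  rewrite (Glb_Rbar_attained _ (Derive h x)); [unfold bellman_objective; cbn [real]; field | exact Hd |].
  intros u Hu. unfold bellman_objective.
  assert (0 <= (u - Derive h x) ^ 2) by apply pow2_ge_0.
  nra.
Qed.

Definition hfun_der (alpha eta q x : R) : R :=
  alpha + sqrt (2 * x + alpha ^ 2) - eta / sqrt (2 * x + q ^ 2).

Definition hfun_der2 (alpha eta q x : R) : R :=
  / sqrt (2 * x + alpha ^ 2) + eta / sqrt (2 * x + q ^ 2) ^ 3.

Lemma is_derive_Rpower_3_2 (z : R) :
  0 < z -> is_derive (fun x => Rpower x (3 / 2)) z (3 / 2 * sqrt z).
Proof.
  intros Hz. apply is_derive_Reals.
  rewrite <- Rpower_sqrt by exact Hz.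
  replace (/ 2) with (3 / 2 - 1) by field.
  apply derivable_pt_lim_power, Hz.
Qed.

Lemma is_derive_hfun (alpha eta q x : R) :
  0 < 2 * x + alpha ^ 2 -> 0 < 2 * x + q ^ 2 ->
  is_derive (hfun alpha eta q) x (hfun_der alpha eta q x).
Proof.
  intros Ha Hq. unfold hfun, Kstar, hfun_der.
  auto_derive.
  - repeat split; [eexists; apply is_derive_Rpower_3_2; simpl in Ha; lra | simpl in Hq; lra].
  - erewrite is_derive_unique by (apply is_derive_Rpower_3_2; simpl in Ha; lra).
    assert (0 < sqrt (2 * x + q ^ 2)) by (apply sqrt_lt_R0; exact Hq).
    simpl. field. simpl in *. lra.
Qed.

Lemma Derive_hfun (alpha eta q x : R) :
  0 < 2 * x + alpha ^ 2 -> 0 < 2 * x + q ^ 2 ->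
  Derive (hfun alpha eta q) x = hfun_der alpha eta q x.
Proof. intros Ha Hq. apply is_derive_unique, is_derive_hfun; assumption. Qed.

Lemma Derive_n_hfun_2 (alpha eta q x : R) :
  0 < 2 * x + alpha ^ 2 -> 0 < 2 * x + q ^ 2 ->
  Derive_n (hfun alpha eta q) 2 x = hfun_der2 alpha eta q x.
Proof.
  intros Ha Hq. simpl Derive_n.
  assert (Hnear : locally x (fun t => - alpha ^ 2 / 2 < t /\ - q ^ 2 / 2 < t)).
  { apply filter_and; apply open_gt; lra. }
  rewrite (Derive_ext_loc _ (hfun_der alpha eta q)).
  - apply is_derive_unique. unfold hfun_der, hfun_der2. simpl in Ha, Hq.
    assert (0 < sqrt (2 * x + alpha * (alpha * 1))) by (apply sqrt_lt_R0; exact Ha).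
    assert (0 < sqrt (2 * x + q * (q * 1))) by (apply sqrt_lt_R0; exact Hq).
    auto_derive.
    + repeat split; lra.
    + simpl. field. lra.
  - revert Hnear. apply filter_imp. intros t [Hta Htq]. apply Derive_hfun; lra.
Qed.

Lemma hfun_der_increasing (alpha eta q x y : R) :
  0 < eta -> 0 < q -> 0 <= x -> x < y -> hfun_der alpha eta q x < hfun_der alpha eta q y.
Proof.
  intros He Hq Hx Hxy. unfold hfun_der.
  assert (sqrt (2 * x + alpha ^ 2) < sqrt (2 * y + alpha ^ 2)).
  { apply sqrt_lt_1_alt. split; [nra | lra]. }
  assert (0 < sqrt (2 * x + q ^ 2)) by (apply sqrt_lt_R0; nra).
  assert (sqrt (2 * x + q ^ 2) <= sqrt (2 * y + q ^ 2)) by (apply sqrt_le_1_alt; lra).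
  assert (/ sqrt (2 * y + q ^ 2) <= / sqrt (2 * x + q ^ 2)) by (apply Rinv_le_contravar; lra).
  unfold Rdiv. nra.
Qed.

Lemma hfun_der_nondecreasing (alpha eta q x y : R) :
  0 < eta -> 0 < q -> 0 <= x -> x <= y -> hfun_der alpha eta q x <= hfun_der alpha eta q y.
Proof.
  intros He Hq Hx Hxy. destruct (Rle_lt_or_eq_dec x y Hxy) as [Hlt | <-].
  - apply Rlt_le, hfun_der_increasing; assumption.
  - apply Rle_refl.
Qed.

Lemma sqrt_affine_le_shift (b c x : R) :
  0 <= b -> 0 <= x -> sqrt (2 * x + b ^ 2) <= sqrt (2 * x + c ^ 2) + b.
Proof.
  intros Hb Hx.
  assert (Hs := sqrt_sqrt (2 * x + b ^ 2)). assert (Hr := sqrt_sqrt (2 * x + c ^ 2)).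
  assert (0 <= sqrt (2 * x + b ^ 2)) by apply sqrt_pos.
  assert (0 <= sqrt (2 * x + c ^ 2)) by apply sqrt_pos.
  assert (0 <= c ^ 2) by apply pow2_ge_0.
  nra.
Qed.

Lemma sqrt_affine_dist_le (a q x : R) :
  0 <= a -> 0 <= q -> 0 <= x -> Rabs (sqrt (2 * x + a ^ 2) - sqrt (2 * x + q ^ 2)) <= a + q.
Proof.
  intros Ha Hq Hx. apply Rabs_le.
  assert (sqrt (2 * x + a ^ 2) <= sqrt (2 * x + q ^ 2) + a) by (apply sqrt_affine_le_shift; assumption).
  assert (sqrt (2 * x + q ^ 2) <= sqrt (2 * x + a ^ 2) + q) by (apply sqrt_affine_le_shift; assumption).
  lra.
Qed.

Lemma inv_sqrt_affine_le (c x : R) :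
  0 < c -> 0 <= x -> / sqrt (2 * x + c ^ 2) <= (1 + / c) * / sqrt (1 + x).
Proof.
  intros Hc Hx.
  assert (Hr2 := sqrt_sqrt (2 * x + c ^ 2)). assert (Ht2 := sqrt_sqrt (1 + x)).
  assert (Hr := sqrt_pos (2 * x + c ^ 2)). assert (Ht := sqrt_pos (1 + x)).
  set (r := sqrt (2 * x + c ^ 2)) in *. set (t := sqrt (1 + x)) in *.
  assert (Hcr : c <= r) by nra.
  assert (Htr : t <= r + 1) by nra.
  assert (Ht1 : 1 <= t) by nra.
  assert (Hrc : 1 <= r / c) by (apply Rmult_le_reg_r with c; [lra | field_simplify; lra]).
  apply Rmult_le_reg_r with (r * t); [nra |].
  replace (/ r * (r * t)) with t by (field; lra).
  replace ((1 + / c) * / t * (r * t)) with (r + r / c) by (field; lra).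
  lra.
Qed.

Lemma bellman_gap_identity (alpha eta sigma2 x s r D : R) :
  s * s = 2 * x + alpha ^ 2 -> 0 < s -> 0 < r -> D = alpha + s - eta / r ->
  x - / 2 * D ^ 2 + alpha * D + / 2 * sigma2 * (/ s + eta / r ^ 3) - eta
  = eta * (s - r) / r - eta ^ 2 / (2 * r ^ 2) + sigma2 / 2 * (/ s + eta / r ^ 3).
Proof.
  intros Hs Hs0 Hr0 ->.
  replace x with ((s * s - alpha ^ 2) / 2) by lra.
  field. lra.
Qed.

Lemma bellman_gap_bound (eta sigma2 q d s r : R) :
  0 < eta -> 0 <= sigma2 -> 0 < q <= r -> 0 < s -> Rabs (s - r) <= d ->
  Rabs (eta * (s - r) / r - eta ^ 2 / (2 * r ^ 2) + sigma2 / 2 * (/ s + eta / r ^ 3))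
  <= (eta * d + eta ^ 2 / (2 * q) + sigma2 * eta / (2 * q ^ 2)) / r + sigma2 / (2 * s).
Proof.
  intros He Hs2 [Hq Hqr] Hs Hd.
  assert (Hiq : / r <= / q) by (apply Rinv_le_contravar; lra).
  assert (Hir : 0 < / r) by (apply Rinv_0_lt_compat; lra).
  assert (Hdrift : Rabs (eta * (s - r) / r) <= eta * d / r).
  { unfold Rdiv. rewrite !Rabs_mult, Rabs_right, (Rabs_right (/ r)) by lra.
    apply Rmult_le_compat_r; [lra |]. apply Rmult_le_compat_l; lra. }
  assert (Hquad : 0 <= eta ^ 2 / (2 * r ^ 2) <= eta ^ 2 / (2 * q) / r).
  { replace (eta ^ 2 / (2 * r ^ 2)) with (eta ^ 2 / 2 * / r * / r) by (field; lra).
    replace (eta ^ 2 / (2 * q) / r) with (eta ^ 2 / 2 * / q * / r) by (field; lra).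
    assert (0 < eta ^ 2 / 2) by nra.
    split; [repeat apply Rmult_le_pos; lra |].
    apply Rmult_le_compat_r; [lra |]. apply Rmult_le_compat_l; lra. }
  assert (Hcurv : 0 <= sigma2 / 2 * (/ s + eta / r ^ 3)
                  <= sigma2 * eta / (2 * q ^ 2) / r + sigma2 / (2 * s)).
  { replace (sigma2 / 2 * (/ s + eta / r ^ 3))
      with (sigma2 / (2 * s) + sigma2 * eta / 2 * (/ r * / r) * / r) by (field; lra).
    replace (sigma2 * eta / (2 * q ^ 2) / r) with (sigma2 * eta / 2 * (/ q * / q) * / r)
      by (field; lra).
    assert (0 <= sigma2 / (2 * s)) by (apply Rmult_le_pos; [lra | apply Rlt_le, Rinv_0_lt_compat; lra]).
    assert (0 <= sigma2 * eta / 2) by nra.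
    assert (/ r * / r <= / q * / q) by (apply Rmult_le_compat; lra).
    assert (sigma2 * eta / 2 * (/ r * / r) <= sigma2 * eta / 2 * (/ q * / q))
      by (apply Rmult_le_compat_l; assumption).
    assert (0 <= sigma2 * eta / 2 * (/ r * / r)) by (apply Rmult_le_pos; nra).
    split; nra. }
  replace ((eta * d + eta ^ 2 / (2 * q) + sigma2 * eta / (2 * q ^ 2)) / r)
    with (eta * d / r + eta ^ 2 / (2 * q) / r + sigma2 * eta / (2 * q ^ 2) / r) by (field; lra).
  apply Rabs_le_between in Hdrift. apply Rabs_le. lra.
Qed.

Definition bellman_gap_const (alpha sigma2 eta q : R) : R :=
  (eta * (alpha + q) + eta ^ 2 / (2 * q) + sigma2 * eta / (2 * q ^ 2)) * (1 + / q)
  + sigma2 / 2 * (1 + / alpha).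

Lemma bellman_error_hfun_gap (alpha sigma2 eta q x : R) :
  0 < alpha -> 0 <= sigma2 -> 0 < eta -> 0 < q -> 0 <= x -> 0 <= hfun_der alpha eta q x ->
  Rabs (bellman_error alpha sigma2 (hfun alpha eta q) x - eta)
  <= bellman_gap_const alpha sigma2 eta q * / sqrt (1 + x).
Proof.
  intros Ha Hs2 He Hq Hx Hder.
  assert (Ha2 : 0 < 2 * x + alpha ^ 2) by nra.
  assert (Hq2 : 0 < 2 * x + q ^ 2) by nra.
  rewrite bellman_error_nonneg_slope by (rewrite Derive_hfun; assumption).
  rewrite Derive_hfun, Derive_n_hfun_2 by assumption.
  assert (Hs := sqrt_lt_R0 _ Ha2). assert (Hr := sqrt_lt_R0 _ Hq2).
  unfold hfun_der2.
  rewrite (bellman_gap_identity alpha eta sigma2 x (sqrt (2 * x + alpha ^ 2))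
             (sqrt (2 * x + q ^ 2))); [| apply sqrt_sqrt; lra | assumption .. | reflexivity].
  eapply Rle_trans.
  { apply bellman_gap_bound with (q := q) (d := alpha + q); [assumption .. | | assumption |].
    - split; [assumption |]. rewrite <- (sqrt_pow2 q) at 1 by lra.
      apply sqrt_le_1_alt. lra.
    - apply sqrt_affine_dist_le; lra. }
  unfold bellman_gap_const.
  set (K := eta * (alpha + q) + eta ^ 2 / (2 * q) + sigma2 * eta / (2 * q ^ 2)).
  assert (HK : 0 <= K).
  { unfold K.
    assert (0 <= eta ^ 2 / (2 * q)) by (apply Rdiv_le_0_compat; nra).
    assert (0 <= sigma2 * eta / (2 * q ^ 2)) by (apply Rdiv_le_0_compat; nra).
    nra. }
  assert (Hir := inv_sqrt_affine_le q x Hq Hx).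
  assert (His := inv_sqrt_affine_le alpha x Ha Hx).
  unfold Rdiv at 1 2.
  replace (/ (2 * sqrt (2 * x + alpha ^ 2))) with (/ 2 * / sqrt (2 * x + alpha ^ 2))
    by (field; lra).
  assert (K * / sqrt (2 * x + q ^ 2) <= K * ((1 + / q) * / sqrt (1 + x)))
    by (apply Rmult_le_compat_l; assumption).
  assert (sigma2 * (/ 2 * / sqrt (2 * x + alpha ^ 2))
          <= sigma2 * (/ 2 * ((1 + / alpha) * / sqrt (1 + x))))
    by (apply Rmult_le_compat_l; lra).
  lra.
Qed.

Lemma bounded_of_inv_sqrt_rate (f : R -> R) (l C : R) :
  (forall x, 0 <= x -> Rabs (f x - l) <= C * / sqrt (1 + x)) ->
  exists M, forall x, 0 <= x -> Rabs (f x) <= M.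
Proof.
  intros Hrate. exists (Rabs l + Rabs C). intros x Hx.
  assert (Ht : 1 <= sqrt (1 + x)) by (rewrite <- sqrt_1 at 1; apply sqrt_le_1_alt; lra).
  assert (Hinv : 0 < / sqrt (1 + x) <= 1).
  { split; [apply Rinv_0_lt_compat; lra |].
    apply Rmult_le_reg_l with (sqrt (1 + x)); [lra |]. rewrite Rinv_r; lra. }
  assert (C * / sqrt (1 + x) <= Rabs C).
  { apply Rle_trans with (Rabs C * / sqrt (1 + x)).
    - apply Rmult_le_compat_r; [lra | apply Rle_abs].
    - rewrite <- (Rmult_1_r (Rabs C)) at 2. apply Rmult_le_compat_l; [apply Rabs_pos | lra]. }
  replace (f x) with ((f x - l) + l) by ring.
  eapply Rle_trans; [apply Rabs_triang |].
  specialize (Hrate x Hx). lra.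
Qed.

Theorem proposition6 (alpha sigma2 eta q : R)
  (Halpha : 0 < alpha) (Hsigma : 0 <= sigma2) (Heta : 0 < eta) (Hq : 0 < q)
  (Hgrad0 : 0 <= Derive (hfun alpha eta q) 0) :
  (forall x y t, 0 <= x -> 0 <= y -> 0 <= t <= 1 ->
     hfun alpha eta q (t * x + (1 - t) * y)
       <= t * hfun alpha eta q x + (1 - t) * hfun alpha eta q y) /\
  (forall x y, 0 <= x -> x < y -> hfun alpha eta q x < hfun alpha eta q y) /\
  (exists M, forall x, 0 <= x ->
     Rabs (bellman_error alpha sigma2 (hfun alpha eta q) x) <= M) /\
  (exists C X, forall x, X <= x ->
     Rabs (bellman_error alpha sigma2 (hfun alpha eta q) x - eta)
       <= C * / sqrt (1 + x)).
Proof.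
  assert (Hder : forall x, 0 <= x -> is_derive (hfun alpha eta q) x (hfun_der alpha eta q x)).
  { intros x Hx. apply is_derive_hfun; nra. }
  assert (Hder0 : 0 <= hfun_der alpha eta q 0) by (rewrite <- Derive_hfun by nra; exact Hgrad0).
  assert (Hpos : forall x, 0 < x -> 0 < hfun_der alpha eta q x).
  { intros x Hx. eapply Rle_lt_trans; [exact Hder0 | apply hfun_der_increasing; lra]. }
  assert (Hrate : forall x, 0 <= x ->
            Rabs (bellman_error alpha sigma2 (hfun alpha eta q) x - eta)
            <= bellman_gap_const alpha sigma2 eta q * / sqrt (1 + x)).
  { intros x Hx. apply bellman_error_hfun_gap; try assumption.
    apply Rle_trans with (hfun_der alpha eta q 0); [exact Hder0 | apply hfun_der_nondecreasing; lra]. }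
  split; [| split; [| split]].
  - apply (convex_of_derive_nondecreasing _ _ 0 Hder).
    intros x y. apply hfun_der_nondecreasing; assumption.
  - apply (increasing_of_derive_pos _ _ 0 Hder Hpos).
  - exact (bounded_of_inv_sqrt_rate _ _ _ Hrate).
  - exists (bellman_gap_const alpha sigma2 eta q), 0. exact Hrate.
Qed.
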